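(* For all integers $0<k \leq \ell < n$, the polynomial \[ \overline{ { n \brack k}}_{q,t} \overline{ { n \brack \ell }}_{q,t} - \overline{ { n-1 \brack k-1}}_{q,t} \overline{ { n+1 \brack \ell+1 }}_{q,t} \] has non-negative coefficients as a polynomial in $q$ and $t$.
   Context: An overpartition is a partition in which the last occurrence of each distinct part size may be overlined; its weight $|\lambda|$ is the sum of its parts. For integers $0\le b\le a$, $\overline{{a \brack b}}_{q,t}=\sum_{\lambda} t^{\#_o(\lambda)} q^{|\lambda|}$, the sum over all overpartitions $\lambda$ with largest part at most $a-b$ and at most $b$ parts, $\#_o(\lambda)$ being the number of overlined parts. *)

From HB Require Import structures.
From mathcomp Require Import all_boot all_order all_algebra.
Set Implicit Arguments. Unset Strict Implicit. Unset Printing Implicit Defensive.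
Import Order.TTheory GRing.Theory Num.Theory.

(* An overpartition is encoded as a list of (part, overlined?) pairs, listed
   with parts in nonincreasing order.  Consecutive entries x, y satisfy
   y.1 <= x.1, and if x is overlined then y.1 < x.1, i.e. only the last
   occurrence of a part size may be overlined. *)
Definition ovp_step (x y : nat * bool) : bool :=
  (y.1 <= x.1) && (x.2 ==> (y.1 < x.1)).

Definition is_ovp_in (m b : nat) (s : seq (nat * bool)) : bool :=
  [&& sorted ovp_step s, all (fun x => 0 < x.1) s,
      all (fun x => x.1 <= m) s & size s <= b].

Definition ovp_weight (s : seq (nat * bool)) : nat := sumn (map fst s).
Definition ovp_noverl (s : seq (nat * bool)) : nat := count snd s.

Definition seq_of_tuple (m len : nat) (tp : len.-tuple ('I_m.+1 * bool))
  : seq (nat * bool) := [seq (nat_of_ord x.1, x.2) | x <- tp].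

(* Over-q,t-binomial  \overline{[a brack b]}_{q,t} as a bivariate polynomial
   with integer coefficients: outer variable t, inner variable q
   (type {poly {poly int}}). *)
Definition qt_term (s : seq (nat * bool)) : {poly {poly int}} :=
  ((('X : {poly int}) ^+ ovp_weight s)%:P * 'X ^+ ovp_noverl s)%R.

Definition overbinom (a b : nat) : {poly {poly int}} :=
  (\sum_(len < b.+1)
     \sum_(tp : len.-tuple ('I_(a - b).+1 * bool)
            | is_ovp_in (a - b) b (seq_of_tuple tp))
       qt_term (seq_of_tuple tp))%R.

Definition nonneg_coefs (P : {poly {poly int}}) : Prop :=
  forall i j : nat, (0 <= (P`_i)`_j)%R.

From mathcomp Require Import all_boot all_order all_algebra.
From mathcomp Require Import zify.
Import GRing.Theory Num.Theory.
Set Implicit Arguments. Unset Strict Implicit. Unset Printing Implicit Defensive.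

(* The difference is a sum of monomials over the pairs (la, mu) of the first product that are
   missed by a weight-preserving injection from the pairs of the second product.  Write
   k = K + 1 and l = K + t + 1.  A pair of the second product consists of an overpartition
   la with parts <= n - k and at most K parts and an overpartition mu with parts <= n - l and
   at most l + 1 = K + t + 2 parts.  Let i be the first position where la_i <= n - l and la_i
   may follow mu_(i+t) in an overpartition (beyond the end of la this always holds).  Exchanging
   the tails la_i la_(i+1) ... and mu_(i+t+1) mu_(i+t+2) ... gives la' with at most K + 1 parts
   bounded by n - k and mu' with at most l parts bounded by n - l, i.e. a pair of the first
   product with the same multiset of parts.  The position i computed from (la', mu') is again
   i, so exchanging the tails once more recovers (la, mu). *)

Lemma find_iota0 (p : pred nat) n i :
  i <= n -> (forall m, m < i -> ~~ p m) -> (i < n -> p i) -> find p (iota 0 n) = i.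
Proof.
move=> le_in before_i at_i.
case: findP => [|j]; rewrite size_iota.
  move=> /hasPn no_p; apply/eqP; rewrite eqn_leq le_in leqNgt andbT.
  by apply/negP => lt_in; have := no_p i; rewrite mem_iota lt_in at_i //= => /(_ isT).
move=> lt_jn p_j before_j; case: (ltngtP j i) => [lt_ji|lt_ij|//].
  by have := p_j 0; rewrite nth_iota // add0n (negbTE (before_i _ lt_ji)).
have lt_in := ltn_trans lt_ij lt_jn.
by have := before_j 0 i lt_ij; rewrite nth_iota // add0n at_i.
Qed.

Section TakeDropCat.
Variables (T : Type) (x0 : T).

Lemma nth_take_drop_cat (x y : seq T) i j m : i <= size x ->
  nth x0 (take i x ++ drop j y) m = if m < i then nth x0 x m else nth x0 y (j + (m - i)).
Proof.
by move=> le_ix; rewrite nth_cat size_takel //; case: ltnP => // *; rewrite ?nth_take ?nth_drop.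
Qed.

Lemma sorted_take_drop_cat (e : rel T) (x y : seq T) i j :
  sorted e x -> sorted e y -> i <= size x ->
  (0 < i -> j < size y -> e (nth x0 x i.-1) (nth x0 y j)) ->
  sorted e (take i x ++ drop j y).
Proof.
move=> /(sortedP x0) ex /(sortedP x0) ey le_ix junction.
apply/(sortedP x0) => m; rewrite size_cat size_takel // size_drop => lt_m.
rewrite !nth_take_drop_cat //; case: (ltngtP m.+1 i) => [lt_mi|lt_im|eq_mi].
- by apply: ex; apply: leq_trans le_ix.
- have -> : j + (m.+1 - i) = (j + (m - i)).+1 by lia.
  by apply: ey; lia.
- by rewrite -eq_mi subnn addn0 in junction lt_m *; apply: junction; lia.
Qed.

Lemma all_take (a : pred T) (x : seq T) i : all a x -> all a (take i x).
Proof. by rewrite -{1}[x](cat_take_drop i) all_cat => /andP[]. Qed.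

Lemma all_drop (a : pred T) (x : seq T) i : all a x -> all a (drop i x).
Proof. by rewrite -{1}[x](cat_take_drop i) all_cat => /andP[]. Qed.

Definition swap_tails i j (p : seq T * seq T) : seq T * seq T :=
  (take i p.1 ++ drop j p.2, take j p.2 ++ drop i p.1).

Lemma swap_tailsK i j (p : seq T * seq T) : i <= size p.1 -> j <= size p.2 ->
  swap_tails i j (swap_tails i j p) = p.
Proof.
case: p => x y /= le_ix le_jy; rewrite /swap_tails /=.
rewrite !take_size_cat ?drop_size_cat ?size_takel //.
by rewrite !cat_take_drop.
Qed.

Lemma swap_tails_id i j (p : seq T * seq T) : size p.1 <= i -> size p.2 <= j ->
  swap_tails i j p = p.
Proof.
by case: p => x y /= le_xi le_yj; rewrite /swap_tails /= !take_oversize ?drop_oversize ?cats0.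
Qed.

End TakeDropCat.

Lemma perm_swap_tails (T : eqType) i j (p : seq T * seq T) :
  perm_eq ((swap_tails i j p).1 ++ (swap_tails i j p).2) (p.1 ++ p.2).
Proof.
case: p => x y; apply/permP => a; rewrite /= !count_cat.
rewrite -[in RHS](cat_take_drop i x) -[in RHS](cat_take_drop j y) !count_cat; lia.
Qed.

Lemma ovp_step_trans : transitive ovp_step.
Proof.
move=> [y1 y2] [x1 x2] [z1 z2]; rewrite /ovp_step /=.
by case: x2; case: y2; rewrite ?implyTb ?implyFb ?andbT; lia.
Qed.

Lemma ovp_step_leq (x y : nat * bool) : ovp_step x y -> y.1 <= x.1.
Proof. by case/andP. Qed.

(* The default value of [nth]: it may follow any part of an overpartition, so the position
   just past the end of [la] always qualifies as a cut position below. *)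
Definition ovp0 : nat * bool := (0, false).

Lemma ovp_step_ovp0 (x : nat * bool) : ovp_step x ovp0 = x.2 ==> (0 < x.1).
Proof. by case: x. Qed.

(* x cannot follow a only if x exceeds W or a, or equals an overlined a; in each case x lies
   strictly above c, which sits two steps below a and is at most W. *)
Lemma ovp_step_skip W (a b c x : nat * bool) :
  ovp_step a b -> ovp_step b c -> c.1 <= W ->
  ~~ ((x.1 <= W) && ovp_step a x) -> ovp_step x c.
Proof.
case: x a b c => [x1 x2] [a1 a2] [b1 b2] [c1 c2]; rewrite /ovp_step /=.
by case: x2; case: a2; case: b2; case: c2; rewrite /= ?andbT; lia.
Qed.

Lemma ovp_step_nth_ovp0 (s : seq (nat * bool)) j :
  all (fun x => 0 < x.1) s -> ovp_step (nth ovp0 s j) ovp0.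
Proof.
move=> s_pos; rewrite ovp_step_ovp0.
case: (ltnP j (size s)) => [lt_js|]; last by move/(nth_default ovp0)->.
by rewrite (all_nthP ovp0 s_pos) ?implybT.
Qed.

Section OverpartitionLists.
Variables (m b : nat) (s : seq (nat * bool)).
Hypothesis s_ovp : is_ovp_in m b s.

Lemma ovp_in_sorted : sorted ovp_step s. Proof. by case/and4P: s_ovp. Qed.
Lemma ovp_in_pos : all (fun x => 0 < x.1) s. Proof. by case/and4P: s_ovp. Qed.
Lemma ovp_in_bound : all (fun x => x.1 <= m) s. Proof. by case/and4P: s_ovp. Qed.
Lemma ovp_in_size : size s <= b. Proof. by case/and4P: s_ovp. Qed.

Lemma ovp_in_nth_bound j : (nth ovp0 s j).1 <= m.
Proof.
case: (ltnP j (size s)) => [lt_js|]; last by move/(nth_default ovp0)->.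
exact: (all_nthP ovp0 ovp_in_bound).
Qed.

Lemma ovp_in_step j : j.+1 < size s -> ovp_step (nth ovp0 s j) (nth ovp0 s j.+1).
Proof. exact: (sortedP ovp0 ovp_in_sorted). Qed.

Lemma ovp_in_drop_bound i : all (fun x => x.1 <= (nth ovp0 s i).1) (drop i s).
Proof.
case: (ltnP i (size s)) => [lt_is|]; last by move/drop_oversize->.
have := drop_sorted i ovp_in_sorted; rewrite (drop_nth ovp0 lt_is) /= leqnn.
move/(order_path_min ovp_step_trans); apply: sub_all => x; exact: ovp_step_leq.
Qed.

Lemma ovp_in_resize b' : size s <= b' -> is_ovp_in m b' s.
Proof. by move=> le_sb; apply/and4P; rewrite ovp_in_sorted ovp_in_pos ovp_in_bound. Qed.

End OverpartitionLists.

Definition cut_fit t W (la mu : seq (nat * bool)) (m : nat) : bool :=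
  ((nth ovp0 la m).1 <= W) && ovp_step (nth ovp0 mu (m + t)) (nth ovp0 la m).

Definition cut_index t W (la mu : seq (nat * bool)) : nat :=
  find (cut_fit t W la mu) (iota 0 (size la)).

Definition ovp_swap t W (p : seq (nat * bool) * seq (nat * bool)) :=
  let i := cut_index t W p.1 p.2 in swap_tails i (i + t.+1) p.

Section CutIndex.
Variables (t W : nat) (la mu : seq (nat * bool)).
Let i := cut_index t W la mu.

Lemma cut_index_le : i <= size la.
Proof. by have := find_size (cut_fit t W la mu) (iota 0 (size la)); rewrite size_iota. Qed.

Lemma cut_fit_before m : m < i -> ~~ cut_fit t W la mu m.
Proof.
move=> lt_mi; have := before_find 0 lt_mi.
by rewrite nth_iota ?add0n => [->|]; last exact: leq_trans lt_mi cut_index_le.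
Qed.

Hypotheses (la_pos : all (fun x => 0 < x.1) la) (mu_pos : all (fun x => 0 < x.1) mu).

Lemma cut_fit_index : cut_fit t W la mu i.
Proof.
case: (ltnP i (size la)) => [lt_i_la|le_la_i].
  have has_fit : has (cut_fit t W la mu) (iota 0 (size la)) by rewrite has_find size_iota.
  by have := nth_find 0 has_fit; rewrite nth_iota.
by rewrite /cut_fit nth_default //= ovp_step_nth_ovp0.
Qed.

Lemma cut_index_lt : i < size la -> i + t < size mu.
Proof.
move=> lt_i_la; rewrite ltnNge; apply/negP => /(nth_default ovp0) mu_i.
have := cut_fit_index; rewrite /cut_fit mu_i => /andP[_ /ovp_step_leq].
by rewrite leqNgt (all_nthP ovp0 la_pos).
Qed.
End CutIndex.

Section OvpSwap.
Variables (W1 W K t : nat) (la mu : seq (nat * bool)).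
Hypotheses (le_W_W1 : W <= W1) (la_ovp : is_ovp_in W1 K la).
Hypothesis mu_ovp : is_ovp_in W (K + t.+2) mu.
Let i := cut_index t W la mu.
Let la_pos := ovp_in_pos la_ovp.
Let mu_pos := ovp_in_pos mu_ovp.

Lemma ovp_swap_degenerate : size mu <= i + t -> ovp_swap t W (la, mu) = (la, mu).
Proof.
move=> le_mu_it; have i_la : i = size la.
  apply/eqP; rewrite eqn_leq cut_index_le leqNgt /=; apply/negP.
  by move/(cut_index_lt la_pos mu_pos); rewrite ltnNge le_mu_it.
by rewrite /ovp_swap /= -/i; apply: swap_tails_id => /=; lia.
Qed.

Section Nondegenerate.
Hypothesis lt_it_mu : i + t < size mu.

Lemma swap_fst_ovp : is_ovp_in W1 K.+1 (take i la ++ drop (i + t.+1) mu).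
Proof.
apply/and4P; split.
- apply: (sorted_take_drop_cat (x0 := ovp0)) (ovp_in_sorted la_ovp) (ovp_in_sorted mu_ovp) _ _.
    exact: cut_index_le.
  move=> i_gt0 lt_mu; have := @cut_fit_before t W la mu i.-1.
  rewrite -/i ltn_predL => /(_ i_gt0).
  move: lt_mu; case: i i_gt0 => // i' _; rewrite /cut_fit /= addSn addnS => lt_mu.
  apply: (ovp_step_skip (b := nth ovp0 mu (i' + t).+1)); rewrite ?(ovp_in_nth_bound mu_ovp) //.
  1, 2: by apply: (ovp_in_step mu_ovp); lia.
- by rewrite all_cat all_take ?all_drop.
- rewrite all_cat all_take ?(ovp_in_bound la_ovp) // all_drop //.
  by apply: sub_all (ovp_in_bound mu_ovp) => x /leq_trans/(_ le_W_W1).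
- rewrite size_cat size_takel ?cut_index_le // size_drop.
  by have := ovp_in_size mu_ovp; lia.
Qed.

Lemma swap_snd_ovp : is_ovp_in W (K + t.+1) (take (i + t.+1) mu ++ drop i la).
Proof.
have [i_bound i_step] := andP (cut_fit_index t W la mu_pos).
apply/and4P; split.
- apply: (sorted_take_drop_cat (x0 := ovp0)) (ovp_in_sorted mu_ovp) (ovp_in_sorted la_ovp) _ _.
    by rewrite addnS.
  by rewrite addnS => _ _; exact: i_step.
- by rewrite all_cat all_take ?all_drop.
- rewrite all_cat all_take ?(ovp_in_bound mu_ovp) //.
  by apply: sub_all (ovp_in_drop_bound la_ovp i) => x /leq_trans/(_ i_bound).
- rewrite size_cat size_takel ?size_drop; last by rewrite addnS.
  by have := ovp_in_size la_ovp; have := cut_index_le t W la mu; lia.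
Qed.

Lemma cut_index_swap :
  cut_index t W (take i la ++ drop (i + t.+1) mu) (take (i + t.+1) mu ++ drop i la) = i.
Proof.
have le_i_la := cut_index_le t W la mu.
have le_it_mu : i + t.+1 <= size mu by rewrite addnS.
apply: find_iota0 => [|m lt_mi|].
- by rewrite size_cat size_takel // leq_addr.
- have lt_mt : m + t < i + t.+1 by lia.
  rewrite /cut_fit !nth_take_drop_cat // lt_mi lt_mt.
  exact: cut_fit_before.
- rewrite size_cat size_takel // size_drop => lt_i.
  rewrite /cut_fit !nth_take_drop_cat ?size_takel // ltnn subnn addn0 addnS ltnSn.
  by rewrite (ovp_in_nth_bound mu_ovp) (ovp_in_step mu_ovp) //; lia.
Qed.

End Nondegenerate.

Lemma ovp_swap_ovp_in :
  is_ovp_in W1 K.+1 (ovp_swap t W (la, mu)).1 &&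
  is_ovp_in W (K + t.+1) (ovp_swap t W (la, mu)).2.
Proof.
case: (ltnP (i + t) (size mu)) => [nondegenerate | degenerate].
  by rewrite /ovp_swap /= swap_fst_ovp ?swap_snd_ovp.
rewrite ovp_swap_degenerate // !(ovp_in_resize la_ovp, ovp_in_resize mu_ovp) //.
all: by have := ovp_in_size la_ovp; have := cut_index_le t W la mu; lia.
Qed.

Lemma ovp_swapK : ovp_swap t W (ovp_swap t W (la, mu)) = (la, mu).
Proof.
case: (ltnP (i + t) (size mu)) => [nondegenerate | degenerate]; last first.
  by rewrite !ovp_swap_degenerate.
rewrite {2}/ovp_swap [ovp_swap _ _ _]/ovp_swap /= cut_index_swap //.
by apply: swap_tailsK; rewrite /= ?cut_index_le // addnS.
Qed.

End OvpSwap.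

Definition ovp_enum (m b : nat) : seq (seq (nat * bool)) :=
  [seq s <- [seq seq_of_tuple tp | len <- iota 0 b.+1,
                                   tp <- index_enum (len.-tuple ('I_m.+1 * bool))]
   | is_ovp_in m b s].

Lemma mem_ovp_enum m b s : (s \in ovp_enum m b) = is_ovp_in m b s.
Proof.
rewrite mem_filter andb_idr // => s_ovp; apply/allpairsPdep.
pose tp := map_tuple (fun x : nat * bool => (inord x.1 : 'I_m.+1, x.2)) (in_tuple s).
exists (size s), tp; split; rewrite ?mem_index_enum ?mem_iota ?ltnS ?(ovp_in_size s_ovp) //.
apply/esym; rewrite /seq_of_tuple /= -map_comp map_id_in // => -[x1 x2].
by move/(allP (ovp_in_bound s_ovp)) => /= le_x1; rewrite inordK.
Qed.

Lemma ovp_enum_uniq m b : uniq (ovp_enum m b).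
Proof.
apply/filter_uniq/allpairs_uniq_dep => [|len _|]; rewrite ?iota_uniq ?index_enum_uniq //.
move=> [l1 tp1] [l2 tp2] _ _ /= eq_tp.
have eq_l : l1 = l2 by move/(congr1 size): eq_tp; rewrite !size_map !size_tuple.
subst l2; congr Tagged; apply/val_inj/(inj_map _ eq_tp).
by move=> [x1 y1] [x2 y2] [/val_inj-> ->].
Qed.

Definition ovp_pairs m b m' b' : seq (seq (nat * bool) * seq (nat * bool)) :=
  [seq (x, y) | x <- ovp_enum m b, y <- ovp_enum m' b'].

Lemma mem_ovp_pairs m b m' b' p :
  (p \in ovp_pairs m b m' b') = is_ovp_in m b p.1 && is_ovp_in m' b' p.2.
Proof.
case: p => x y; apply/allpairsP/andP => [[[x' y'] [/= + + [-> ->]]]|[x_ovp y_ovp]].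
  by rewrite !mem_ovp_enum.
by exists (x, y); rewrite !mem_ovp_enum.
Qed.

Lemma ovp_pairs_uniq m b m' b' : uniq (ovp_pairs m b m' b').
Proof. by apply: allpairs_uniq; rewrite ?ovp_enum_uniq // => -[? ?] [? ?] _ _. Qed.

Local Open Scope ring_scope.

Lemma sum_sub_injection (V : zmodType) (T : eqType) (F : T -> V) (g : T -> T) (N P : seq T) :
  uniq N -> uniq P -> {in N, forall x, g x \in P} -> {in N &, injective g} ->
  {in N, forall x, F (g x) = F x} ->
  \sum_(x <- P) F x - \sum_(x <- N) F x = \sum_(x <- P | x \notin map g N) F x.
Proof.
move=> uN uP gNP g_inj Fg.
have uniq_gN : uniq (map g N) by rewrite map_inj_in_uniq.
have gNP_perm : perm_eq P (map g N ++ [seq x <- P | x \notin map g N]).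
  apply: uniq_perm; rewrite ?cat_uniq ?uniq_gN ?filter_uniq //=.
    by rewrite andbT; apply/hasP => -[x]; rewrite mem_filter => /andP[/negP].
  move=> x; rewrite mem_cat mem_filter.
  by case: (boolP (x \in map g N)) => //= /mapP[y /gNP ? ->].
rewrite [X in X - _](perm_big _ gNP_perm) big_cat big_map (eq_big_seq _ Fg).
by rewrite big_filter addrC addKr.
Qed.

Lemma overbinomE a b : overbinom a b = \sum_(s <- ovp_enum (a - b) b) qt_term s.
Proof.
rewrite /overbinom /ovp_enum [RHS]big_filter [RHS]big_mkcond [RHS]big_allpairs_dep.
rewrite -[iota 0 b.+1]/(index_iota 0 b.+1) big_mkord.
by apply: eq_bigr => len _; rewrite [LHS]big_mkcond.
Qed.

Lemma qt_term_cat s1 s2 : qt_term (s1 ++ s2) = qt_term s1 * qt_term s2.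
Proof.
rewrite /qt_term /ovp_weight /ovp_noverl map_cat sumn_cat count_cat !exprD polyCM.
by rewrite mulrACA.
Qed.

Lemma perm_qt_term s1 s2 : perm_eq s1 s2 -> qt_term s1 = qt_term s2.
Proof.
move=> perm_s; rewrite /qt_term /ovp_weight /ovp_noverl.
by rewrite (perm_sumn (perm_map _ perm_s)) (permP perm_s).
Qed.

Lemma nonneg_coefs_qt_term s : nonneg_coefs (qt_term s).
Proof.
move=> i j; rewrite /qt_term coefMXn; case: ifP => _; first by rewrite coef0.
by rewrite coefC; case: ifP => _; rewrite ?coef0 // coefXn ler0n.
Qed.

Lemma nonneg_coefs_sum (I : Type) (r : seq I) (P : pred I) (F : I -> {poly {poly int}}) :
  (forall x, nonneg_coefs (F x)) -> nonneg_coefs (\sum_(x <- r | P x) F x).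
Proof. by move=> F_ge0 i j; rewrite !coef_sum; apply: sumr_ge0 => x _; apply: F_ge0. Qed.

Lemma overbinomM a b c d : overbinom a b * overbinom c d =
  \sum_(p <- ovp_pairs (a - b) b (c - d) d) qt_term (p.1 ++ p.2).
Proof.
rewrite !overbinomE big_distrlr [RHS]big_allpairs.
by apply: eq_bigr => x _; apply: eq_bigr => y _; rewrite qt_term_cat.
Qed.

Local Close Scope ring_scope.

Theorem theorem6p2 (n k l : nat) :
  0 < k -> k <= l -> l < n ->
  nonneg_coefs
    (overbinom n k * overbinom n l
     - overbinom (n - 1) (k - 1) * overbinom (n + 1) (l + 1))%R.
Proof.
move=> k_gt0 le_kl lt_ln.
have [K [t [-> ->]]] : exists K t, k = K.+1 /\ l = K + t.+1 by exists k.-1, (l - k); lia.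
rewrite !overbinomM.
have -> : n - 1 - (K.+1 - 1) = n - K.+1 by lia.
have -> : n + 1 - (K + t.+1 + 1) = n - (K + t.+1) by lia.
have -> : K.+1 - 1 = K by lia.
have -> : K + t.+1 + 1 = K + t.+2 by lia.
have le_W_W1 : n - (K + t.+1) <= n - K.+1 by lia.
set W := n - (K + t.+1).
rewrite (sum_sub_injection (g := ovp_swap t W)).
- by apply: nonneg_coefs_sum => p; apply: nonneg_coefs_qt_term.
- exact: ovp_pairs_uniq.
- exact: ovp_pairs_uniq.
- by move=> [la mu]; rewrite !mem_ovp_pairs => /andP[la_ovp mu_ovp]; apply: ovp_swap_ovp_in.
- apply: (can_in_inj (g := ovp_swap t W)) => -[la mu].
  by rewrite mem_ovp_pairs => /andP[la_ovp mu_ovp]; apply: ovp_swapK la_ovp mu_ovp.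
- by move=> p _; apply/perm_qt_term/perm_swap_tails.
Qed.
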